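(* Let $K>0$ and let $f$ be an integer-valued polynomial of degree $n\ge1$. Then the number of integers $m$ with $|f(m)|\le K$ is at most $n+4(K\,n!)^{1/n}$. In particular, for any finite set $S\subset\mathbb{Z}$ whose elements all have absolute value at most $K$, the number $E_S(f)$ of integers $m$ with $f(m)\in S$ satisfies $E_S(f)\le (1+4/e)\,n+O(\log n)$, where the implied constant depends only on $K$.
   Context: A polynomial $f\in\mathbb{Q}[x]$ is integer-valued if $f(m)\in\mathbb{Z}$ for every $m\in\mathbb{Z}$. For a finite set $S$, $E_S(f)=\#\{m\in\mathbb{Z}: f(m)\in S\}$. *)

From HB Require Import structures.
From mathcomp Require Import all_boot all_order all_algebra.
From mathcomp Require Import all_classical all_reals all_analysis.
Set Implicit Arguments. Unset Strict Implicit. Unset Printing Implicit Defensive.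
Import Order.TTheory GRing.Theory Num.Theory.
Local Open Scope ring_scope.

Definition int_valued (f : {poly rat}) : Prop :=
  forall m : int, f.[m%:~R] \is a Num.int.

(* "The number of integers m satisfying P is at most B":
   every finite list of pairwise distinct integers satisfying P has
   length at most B (this also forces the set to be finite). *)
Definition count_at_most (R : realType) (P : int -> Prop) (B : R) : Prop :=
  forall s : seq int, uniq s -> (forall m, m \in s -> P m) -> (size s)%:R <= B.

From HB Require Import structures.
From mathcomp Require Import all_boot all_order all_algebra.
From mathcomp Require Import all_classical all_reals all_analysis.
From mathcomp Require polyrcf.
From mathcomp Require Import ring lra zify.
Set Implicit Arguments. Unset Strict Implicit. Unset Printing Implicit Defensive.
Import Order.TTheory GRing.Theory Num.Theory.
Local Open Scope ring_scope.

(* Let [n = deg f] and suppose [N > n + l] integers [t_0 < ... < t_(N-1)] satisfy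
   [|f(t_i)| <= K], where [l = 4 (K n!)^(1/n)]. Affinely map the [n + 1] extrema of
   the Chebyshev polynomial [T_n] onto [0, l]: rounding them down and adding their
   index picks [n + 1] of the [t_i] whose gaps dominate those of the mapped extrema.
   Shifting the mapped zeros of [T_n] along gives a monic [P] of degree [n] which
   alternates in sign at these points and satisfies [|P| >= 2 (l/4)^n = 2 K n!]
   there. As [n! lead_coef f] is a nonzero integer, [|lead_coef f * P| > |f|] at
   all [n + 1] points, so [lead_coef f * P - f], of degree [< n], would have [n]
   sign changes. The asymptotic form follows from [n! <= e n^(n+1) e^(-n)]. *)

Section Alternation.
Variable R : rcfType.

Lemma incr_le (n : nat) (x : nat -> R) :
  (forall i j, (i < j <= n)%N -> x i < x j) -> forall i j, (i <= j <= n)%N -> x i <= x j.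
Proof.
move=> x_incr i j /andP[]; rewrite leq_eqVlt => /predU1P[->//|ij] jn.
exact/ltW/x_incr/andP.
Qed.

Lemma alternating_size_gt (m : nat) (p : {poly R}) (x : nat -> R) :
  (forall i j, (i < j <= m)%N -> x i < x j) ->
  (forall k, (k < m)%N -> p.[x k] * p.[x k.+1] < 0) ->
  p != 0 -> (m < size p)%N.
Proof.
elim: m p => [|m IH] p x_incr p_alt p_neq0; first by rewrite size_poly_gt0.
have xmm1 : x m <= x m.+1 by apply/ltW/x_incr; rewrite ltnSn.
have [w /andP[xm_w _]] := polyrcf.poly_ivtoo xmm1 (p_alt m (ltnSn m)).
case/factor_theorem => q def_p.
have q_neq0 : q != 0 by apply: contraNneq p_neq0 => q0; rewrite def_p q0 mul0r.
have -> : size p = (size q).+1.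
  by rewrite def_p size_Mmonic ?monicXsubC // size_XsubC addn2.
rewrite ltnS; apply: IH => // [i j /andP[ij jm]|k km].
  by apply: x_incr; rewrite ij (leq_trans jm).
have lt_w i : (i <= m)%N -> x i - w < 0.
  rewrite subr_lt0 leq_eqVlt => /predU1P[->|im] //.
  by apply: lt_trans xm_w; apply: x_incr; rewrite im /=.
have := p_alt k (ltnW km); rewrite def_p !hornerM !hornerXsubC mulrACA.
by rewrite pmulr_llt0 // nmulr_rgt0 ?lt_w // ltnW.
Qed.

Lemma sub_dominated_gt0 (u v : R) : `|u| < `|v| -> 0 < (v - u) * v.
Proof.
rewrite ltr_norml => /andP[uv1 uv2].
case: (ltrP v 0) => hv; move: uv1 uv2.
  rewrite ltr0_norm // opprK => uv1 uv2; nra.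
rewrite ger0_norm // => uv1 uv2; nra.
Qed.

Lemma sign_changing_sub_dominated (u1 v1 u2 v2 : R) :
  `|u1| < `|v1| -> `|u2| < `|v2| -> v1 * v2 < 0 -> (v1 - u1) * (v2 - u2) < 0.
Proof.
move=> /sub_dominated_gt0 h1 /sub_dominated_gt0 h2 v12.
have := mulr_gt0 h1 h2; rewrite mulrACA.
by rewrite (nmulr_lgt0 _ v12).
Qed.

(* Otherwise [lead_coef F *: P - F] would have degree [< n] and [n] sign changes. *)
Lemma alternating_monic_not_dominated (n : nat) (F P : {poly R}) (x : nat -> R) :
  size F = n.+1 -> P \is monic -> size P = n.+1 ->
  (forall i j, (i < j <= n)%N -> x i < x j) ->
  (forall k, (k < n)%N -> P.[x k] * P.[x k.+1] < 0) ->
  ~ (forall k, (k <= n)%N -> `|F.[x k]| < `|lead_coef F * P.[x k]|).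
Proof.
move=> sF mP sP x_incr P_alt F_small.
set a := lead_coef F; pose G := a *: P - F.
have hornerG y : G.[y] = a * P.[y] - F.[y] by rewrite hornerD hornerN hornerZ.
have sG : (size G <= n)%N.
  apply/leq_sizeP => j; rewrite leq_eqVlt => /predU1P[<-|nj].
    have P_n : P`_n = 1 by move/monicP: mP; rewrite lead_coefE sP.
    by rewrite coefB coefZ P_n mulr1 /a lead_coefE sF subrr.
  by rewrite coefB coefZ !nth_default ?mulr0 ?subrr ?sP ?sF.
have G_neq0 : G != 0.
  apply: contraTneq (F_small 0%N (leq0n n)) => G0.
  move/eqP: (hornerG (x 0%N)); rewrite G0 horner0 eq_sym subr_eq0 => /eqP->.
  by rewrite ltxx.
have G_alt k : (k < n)%N -> G.[x k] * G.[x k.+1] < 0.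
  move=> kn; rewrite !hornerG; apply: sign_changing_sub_dominated.
  - exact/F_small/ltnW.
  - exact: F_small.
  have a_neq0 : a != 0 by rewrite lead_coef_eq0 -size_poly_gt0 sF.
  by rewrite mulrACA pmulr_rlt0 ?P_alt // -expr2 exprn_even_gt0.
by have := alternating_size_gt x_incr G_alt G_neq0; rewrite ltnNge sG.
Qed.

Lemma prod_interlaced_alternating (n : nat) (x rho : nat -> R) :
  (forall i j, (i < j <= n)%N -> x i < x j) ->
  (forall j, (j < n)%N -> x j < rho j < x j.+1) ->
  forall k, (k < n)%N ->
  (\prod_(j < n) (x k - rho j)) * \prod_(j < n) (x k.+1 - rho j) < 0.
Proof.
move=> x_incr interlace; have x_le := incr_le x_incr.
have left_of k j : (k <= j < n)%N -> x k - rho j < 0.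
  case/andP=> kj jn; have /andP[xr _] := interlace j jn.
  by rewrite subr_lt0 (le_lt_trans _ xr) // x_le // kj ltnW.
have right_of k j : (j < k <= n)%N -> 0 < x k - rho j.
  case/andP=> jk kn; have /andP[_ rx] := interlace j (leq_trans jk kn).
  by rewrite subr_gt0 (lt_le_trans rx) // x_le // jk.
move=> k kn; rewrite -big_split /= (bigD1 (Ordinal kn)) //=.
have others : 0 < \prod_(j < n | j != Ordinal kn) ((x k - rho j) * (x k.+1 - rho j)).
  apply: prodr_gt0 => j; rewrite -val_eqE /=; have jn := ltn_ord j.
  case: (ltngtP j k) => // [jk|kj] _.
    by rewrite mulr_gt0 ?right_of //; lia.
  by rewrite nmulr_rgt0 ?left_of //; lia.
by rewrite (pmulr_llt0 _ others) nmulr_rlt0 ?left_of ?right_of ?leqnn ?kn.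
Qed.

End Alternation.

(* [f(X + 1) - f], written via Taylor's formula to make its coefficients explicit. *)
Definition fwd_diff (R : nzRingType) (f : {poly R}) : {poly R} :=
  \sum_(1 <= i < size f) f^`N(i).

Lemma horner_fwd_diff (R : nzRingType) (f : {poly R}) x :
  (fwd_diff f).[x] = f.[x + 1] - f.[x].
Proof.
have [/eqP|] := posnP (size f).
  rewrite size_poly_eq0 => /eqP->.
  by rewrite /fwd_diff size_poly0 big_geq // !horner0 subr0.
rewrite /fwd_diff horner_sum (nderiv_taylor _ (commr1 x)).
case: (size f) => [//|n] _.
rewrite big_ord_recl nderivn0 expr0 mulr1 (addrC f.[x]) addrK big_add1 big_mkord.
by apply: eq_bigr => i _; rewrite expr1n mulr1.
Qed.

Lemma fwd_diff_size_lead (R : numDomainType) (n : nat) (f : {poly R}) :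
  size f = n.+2 ->
  size (fwd_diff f) = n.+1 /\ lead_coef (fwd_diff f) = lead_coef f *+ n.+1.
Proof.
move=> sf; set g := fwd_diff f.
have coef_g k : g`_k = \sum_(1 <= i < n.+2) f`_(i + k) *+ 'C(i + k, i).
  by rewrite coef_sum sf; apply: eq_bigr => i _; rewrite coef_nderivn.
have g_high k : (n < k)%N -> g`_k = 0.
  move=> nk; rewrite coef_g big_nat big1 // => i /andP[i1 _].
  by rewrite nth_default ?mul0rn // sf; lia.
have g_n : g`_n = lead_coef f *+ n.+1.
  rewrite coef_g big_ltn // big_nat big1 => [|i /andP[i2 _]].
    by rewrite addr0 add1n bin1 lead_coefE sf.
  by rewrite nth_default ?mul0rn // sf; lia.
have lf_neq0 : lead_coef f != 0 by rewrite lead_coef_eq0 -size_poly_gt0 sf.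
have sg : size g = n.+1.
  apply/eqP; rewrite eqn_leq; apply/andP; split; first exact/leq_sizeP.
  rewrite ltnNge; apply: contra lf_neq0 => /leq_sizeP/(_ n (leqnn n)).
  by rewrite g_n => /eqP; rewrite mulrn_eq0.
by rewrite lead_coefE sg g_n.
Qed.

Lemma int_valued_lead_coef (n : nat) (f : {poly rat}) :
  size f = n.+1 -> int_valued f -> n`!%:R * lead_coef f \is a Num.int.
Proof.
elim: n f => [|n IH] f sf f_int.
  by rewrite mul1r lead_coefE sf -horner_coef0; have := f_int 0; rewrite mulr0z.
have [sg lg] := fwd_diff_size_lead sf.
have g_int : int_valued (fwd_diff f).
  by move=> m; rewrite horner_fwd_diff -[1]/(1%:~R) -intrD rpredB.
have := IH _ sg g_int.
by rewrite lg -[lead_coef f *+ _]mulr_natl mulrA (mulrC n`!%:R) factS natrM.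
Qed.

Section Chebyshev.
Variable R : realType.

Fixpoint cheb_pair (n : nat) : {poly R} * {poly R} :=
  if n is n'.+1 then let: (p, q) := cheb_pair n' in (q, 2 *: (q * 'X) - p)
  else (1, 'X).

Definition cheb (n : nat) : {poly R} := (cheb_pair n).1.

Lemma horner_cheb_pair_cos (n : nat) (t : R) :
  (cheb_pair n).1.[cos t] = cos (n%:R * t) /\
  (cheb_pair n).2.[cos t] = cos (n.+1%:R * t).
Proof.
elim: n => [|n] /=; first by rewrite hornerC hornerX mul0r cos0 mul1r.
case: (cheb_pair n) => p q /= [hp hq]; split => //.
rewrite hornerD hornerN hornerZ hornerMX hp hq.
have nSt k : k.+1%:R * t = k%:R * t + t by rewrite -[k.+1]addn1 natrD mulrDl mul1r.
by rewrite (nSt n.+1) -[n%:R * t](addrK t) -(nSt n) cosB cosD; ring.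
Qed.

Lemma horner_cheb_cos (n : nat) (t : R) : (cheb n).[cos t] = cos (n%:R * t).
Proof. exact: (horner_cheb_pair_cos n t).1. Qed.

Lemma size_lead_cheb_pair (n : nat) :
  [/\ (size (cheb_pair n).1 <= n.+1)%N, size (cheb_pair n).2 = n.+2
     & lead_coef (cheb_pair n).2 = 2 ^+ n].
Proof.
elim: n => [|n] /=; first by rewrite size_poly1 size_polyX lead_coefX.
case: (cheb_pair n) => p q /= [sp sq lq].
have sqX : size (2 *: (q * 'X)) = n.+3.
  by rewrite size_scale ?pnatr_eq0 // size_mulX -?size_poly_gt0 sq.
have lt_pq : (size (- p) < size (2 *: (q * 'X)))%N.
  by rewrite size_polyN sqX (leq_ltn_trans sp).
by rewrite sq size_polyDl // lead_coefDl // lead_coefZ lead_coefMX lq exprS sqX.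
Qed.

Lemma size_lead_cheb (n : nat) :
  size (cheb n.+1) = n.+2 /\ lead_coef (cheb n.+1) = 2 ^+ n.
Proof.
by rewrite /cheb /=; case: (size_lead_cheb_pair n); case: (cheb_pair n).
Qed.

Lemma cos_oddpihalf (j : nat) : cos (j.*2.+1%:R * pi / 2) = 0 :> R.
Proof.
have -> : j.*2.+1%:R * pi / 2 = pi / 2 + pi *+ j :> R.
  by rewrite -mulr_natl -addn1 -muln2 natrD natrM; field.
by rewrite (alternatingn (@cosDpi R)) cos_pihalf mulr0.
Qed.

Lemma norm_cos_mulpi (k : nat) : `|cos (k%:R * pi)| = 1 :> R.
Proof.
rewrite mulr_natl -[pi *+ k]add0r (alternatingn (@cosDpi R)) cos0 mulr1.
by rewrite normrX normrN1 expr1n.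
Qed.

Lemma frac_pi_in_itv (a d : nat) : (a <= d)%N -> a%:R * pi / d%:R \in `[0, pi : R].
Proof.
move=> ad; rewrite in_itv /= divr_ge0 ?mulr_ge0 ?pi_ge0 //=.
have [->|d_gt0] := posnP d; first by rewrite invr0 mulr0 pi_ge0.
by rewrite ler_pdivrMr ?ltr0n // mulrC ler_pM2l ?pi_gt0 // ler_nat.
Qed.

Lemma cos_frac_pi_lt (a b d : nat) :
  (a < b <= d)%N -> cos (b%:R * pi / d%:R) < cos (a%:R * pi / d%:R) :> R.
Proof.
move=> /andP[ab bd].
have d_gt0 : (0 < d)%N by rewrite (leq_trans _ bd) // (leq_ltn_trans _ ab).
rewrite ltr_cos ?frac_pi_in_itv ?(leq_trans (ltnW ab)) //.
by rewrite ltr_pM2r ?invr_gt0 ?ltr0n // ltr_pM2r ?pi_gt0 // ltr_nat.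
Qed.

(* Over the common denominator [2n]: the zeros of [cheb n], and the points where
   [|cheb n| = 1]. *)
Definition cheb_node (n j : nat) : R := cos (j.*2.+1%:R * pi / n.*2%:R).
Definition cheb_ext (n k : nat) : R := cos (k.*2%:R * pi / n.*2%:R).

Lemma cheb_ext_decr (n i j : nat) : (i < j <= n)%N -> cheb_ext n j < cheb_ext n i.
Proof. by move=> ijn; apply: cos_frac_pi_lt; rewrite -!muln2; lia. Qed.

Lemma cheb_node_interlace (n j : nat) :
  (j < n)%N -> cheb_ext n j.+1 < cheb_node n j < cheb_ext n j.
Proof.
by move=> jn; rewrite !cos_frac_pi_lt // -!muln2; lia.
Qed.

Lemma cheb_node_root (n j : nat) : (j < n)%N -> (cheb n).[cheb_node n j] = 0.
Proof.
move=> jn; rewrite horner_cheb_cos -(@cos_oddpihalf j); congr cos.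
have n_neq0 : n%:R != 0 :> R by rewrite pnatr_eq0 -lt0n (leq_ltn_trans _ jn).
by rewrite -[n.*2]muln2 natrM; field.
Qed.

Lemma cheb_node_inj (n i j : nat) :
  (i < n)%N -> (j < n)%N -> cheb_node n i = cheb_node n j -> i = j.
Proof.
move=> i_n j_n /cos_inj; rewrite !frac_pi_in_itv ?ltn_double // => /(_ isT isT).
have n2_neq0 : n.*2%:R != 0 :> R.
  by rewrite pnatr_eq0 double_eq0 -lt0n (leq_ltn_trans _ i_n).
move/(congr1 (fun x => x * n.*2%:R / pi)).
rewrite !divfK // !mulfK ?gt_eqF ?pi_gt0 // => /eqP.
by rewrite eqr_nat eqSS -!muln2 eqn_mul2r => /eqP.
Qed.

Lemma horner_cheb_nodes (m : nat) (x : R) :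
  (cheb m.+1).[x] = 2 ^+ m * \prod_(j < m.+1) (x - cheb_node m.+1 j).
Proof.
have [sT lT] := size_lead_cheb m.
set rs := [seq cheb_node m.+1 j | j <- iota 0 m.+1].
have rs_roots : all (root (cheb m.+1)) rs.
  apply/allP => y /mapP[j]; rewrite mem_iota => /andP[_ jm] ->.
  exact/eqP/cheb_node_root.
have rs_uniq : uniq_roots rs.
  rewrite uniq_rootsE map_inj_in_uniq ?iota_uniq // => i j.
  by rewrite !mem_iota => /andP[_ i_m] /andP[_ j_m]; apply: cheb_node_inj.
rewrite (all_roots_prod_XsubC _ rs_roots rs_uniq) ?size_map ?size_iota //.
rewrite hornerZ lT horner_prod big_map.
rewrite -(big_mkord xpredT (fun j => x - cheb_node m.+1 j)).
by congr (_ * _); rewrite /index_iota subn0; apply: eq_bigr => j _; rewrite hornerXsubC.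
Qed.

Lemma prod_norm_cheb_ext_sub_node (n k : nat) : (0 < n)%N -> (k <= n)%N ->
  \prod_(j < n) `|cheb_ext n k - cheb_node n j| = (2 ^+ n.-1)^-1.
Proof.
case: n => [//|m] _ km; have two_m : (2 : R) ^+ m != 0 by rewrite expf_neq0 ?pnatr_eq0.
apply: (mulfI two_m); rewrite mulfV // -normr_prod -[2 ^+ m]ger0_norm ?exprn_ge0 //.
rewrite -normrM -horner_cheb_nodes horner_cheb_cos.
have -> : m.+1%:R * (k.*2%:R * pi / m.+1.*2%:R) = k%:R * pi :> R.
  by rewrite -!muln2 !natrM; field.
exact: norm_cos_mulpi.
Qed.

End Chebyshev.

Section Counting.
Variable R : realType.

(* Witnesses: the Chebyshev extrema and nodes under [y |-> l/2 (1 - y)]; the product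
   is then [(l/2)^n / 2^(n-1)]. *)
Lemma cheb_config (n : nat) (l : R) : (0 < n)%N -> 0 < l ->
  exists z c : nat -> R,
  [/\ forall k, (k <= n)%N -> 0 <= z k <= l,
      forall i j, (i < j <= n)%N -> z i < z j,
      forall j, (j < n)%N -> z j < c j < z j.+1 &
      forall k, (k <= n)%N -> \prod_(j < n) `|z k - c j| = 2 * (l / 4) ^+ n].
Proof.
move=> n_gt0 l_gt0; have l2_gt0 : 0 < l / 2 by rewrite divr_gt0.
exists (fun k => l / 2 * (1 - cheb_ext R n k)), (fun j => l / 2 * (1 - cheb_node R n j)).
split=> [k _|i j ijn|j jn|k kn].
- have := cos_geN1 (k.*2%:R * pi / n.*2%:R : R).
  have := cos_le1 (k.*2%:R * pi / n.*2%:R : R).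
  rewrite /cheb_ext; nra.
- by rewrite ltr_pM2l // ltrD2l ltrN2 cheb_ext_decr.
- have /andP[lt1 lt2] := cheb_node_interlace R jn.
  by rewrite !ltr_pM2l // !ltrD2l !ltrN2 lt1 lt2.
- have scale (e c : R) : `|l / 2 * (1 - e) - l / 2 * (1 - c)| = l / 2 * `|e - c|.
    by rewrite -mulrBr normrM gtr0_norm // -normrN; congr (_ * `|_|); ring.
  under eq_bigr do rewrite scale.
  rewrite big_split /= prodr_const card_ord prod_norm_cheb_ext_sub_node //.
  case: n n_gt0 {kn} => // m _.
  have -> : (4 : R) = 2 * 2 by rewrite -natrM.
  by rewrite !expr_div_n exprMn !exprS; field; rewrite expf_neq0 // pnatr_eq0.
Qed.

(* Rounding [z k] down and adding [k] yields an increasing choice of indices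
   whose gaps exceed those of [z]. *)
Lemma pick_dominating_gaps (n N : nat) (l : R) (t z : nat -> R) :
  (forall i j, (i <= j < N)%N -> j%:R - i%:R <= t j - t i) ->
  (forall i j, (i <= j <= n)%N -> z i <= z j) ->
  (forall k, (k <= n)%N -> 0 <= z k <= l) -> l + n%:R < N%:R ->
  exists2 r : nat -> nat, (forall k, (k <= n)%N -> (r k < N)%N) &
    (forall a b, (a <= b <= n)%N -> z b - z a <= t (r b) - t (r a)).
Proof.
move=> t_gaps z_le z_bnd lnN; set r := fun k => (Num.truncn (z k) + k)%N.
have z_trunc k : (k <= n)%N -> (Num.truncn (z k))%:R <= z k < (Num.truncn (z k)).+1%:R.
  by move=> kn; apply: truncn_itv; case/andP: (z_bnd k kn).
have r_lt k : (k <= n)%N -> (r k < N)%N.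
  move=> kn; have /andP[trunc_le _] := z_trunc k kn; have /andP[_ zk_le] := z_bnd k kn.
  have : k%:R <= n%:R :> R by rewrite ler_nat.
  rewrite -(ltr_nat R) natrD; lra.
exists r => // a b /[dup] abn /andP[ab bn]; have an := leq_trans ab bn.
case: (ltngtP a b) ab => [a_lt_b|//|->] _; last by rewrite !subrr.
have /andP[za1 za2] := z_trunc a an; have /andP[zb1 zb2] := z_trunc b bn.
have zab := z_le a b abn.
have ab1 : a%:R + 1 <= b%:R :> R by rewrite natr1 ler_nat.
have key : z b - z a < (r b)%:R - (r a)%:R.
  by rewrite !natrD; rewrite -natr1 in zb2; lra.
apply: (le_trans (ltW key)); apply: t_gaps; rewrite r_lt // andbT -(ler_nat R).
lra.
Qed.

Section ShiftedNodes.
Variables (n : nat) (x z c : nat -> R).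
Hypothesis x_gaps : forall a b, (a <= b <= n)%N -> z b - z a <= x b - x a.
Hypothesis z_incr : forall i j, (i < j <= n)%N -> z i < z j.
Hypothesis z_c_interlace : forall j, (j < n)%N -> z j < c j < z j.+1.

Let rho j := x j + (c j - z j).

Lemma gaps_incr i j : (i < j <= n)%N -> x i < x j.
Proof.
move=> /[dup] /z_incr zij /andP[ij jn]; have ijn : (i <= j <= n)%N by rewrite ltnW.
by have := x_gaps ijn; lra.
Qed.

Lemma shifted_interlace j : (j < n)%N -> x j < rho j < x j.+1.
Proof.
move=> jn; have /andP[zc cz] := z_c_interlace jn.
have jSn : (j <= j.+1 <= n)%N by rewrite leqnSn.
by have := x_gaps jSn; rewrite /rho; lra.
Qed.

Lemma norm_sub_shifted_ge k j : (k <= n)%N -> (j < n)%N ->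
  `|z k - c j| <= `|x k - rho j|.
Proof.
move=> kn jn; have /andP[zc cz] := z_c_interlace jn; rewrite /rho.
case: (leqP k j) => [kj|jk].
  have kjn : (k <= j <= n)%N by rewrite kj ltnW.
  move: (incr_le z_incr kjn) (x_gaps kjn) => zkj gap.
  by rewrite !ltr0_norm; lra.
have jSkn : (j.+1 <= k <= n)%N by rewrite jk.
have jkn : (j <= k <= n)%N by rewrite ltnW.
move: (incr_le z_incr jSkn) (x_gaps jkn) => zjk gap.
by rewrite !gtr0_norm; lra.
Qed.

End ShiftedNodes.

Lemma exprn_powRV (y : R) (n : nat) : (0 < n)%N -> 0 <= y -> (y `^ n%:R^-1) ^+ n = y.
Proof.
move=> n_gt0 y_ge0; rewrite -powR_mulrn ?powR_ge0 // -powRrM mulVf ?powRr1 //.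
by rewrite pnatr_eq0 -lt0n.
Qed.

Lemma count_le_of_bounded_values (n N : nat) (F : {poly R}) (K : R) (t : nat -> R) :
  (0 < n)%N -> 0 < K -> size F = n.+1 -> 1 <= `|lead_coef F| * n`!%:R ->
  (forall i j, (i <= j < N)%N -> j%:R - i%:R <= t j - t i) ->
  (forall i, (i < N)%N -> `|F.[t i]| <= K) ->
  N%:R <= n%:R + 4 * (K * n`!%:R) `^ n%:R^-1.
Proof.
move=> n_gt0 K_gt0 sF lead_ge t_gaps F_small; rewrite leNgt; apply/negP => N_big.
set X := (K * n`!%:R) `^ n%:R^-1.
have Kfact_gt0 : 0 < K * n`!%:R by rewrite mulr_gt0 // ltr0n fact_gt0.
have X_gt0 : 0 < X by apply: powR_gt0.
have l_gt0 : 0 < 4 * X by rewrite mulr_gt0.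
have [z [c [z_bnd z_incr z_c zc_prod]]] := cheb_config n_gt0 l_gt0.
have zc_prodK k : (k <= n)%N -> \prod_(j < n) `|z k - c j| = 2 * (K * n`!%:R).
  by move=> kn; rewrite zc_prod // [4 * X]mulrC mulfK // exprn_powRV // ltW.
have lN : 4 * X + n%:R < N%:R by rewrite addrC.
have [r r_lt x_gaps] := pick_dominating_gaps t_gaps (incr_le z_incr) z_bnd lN.
set x := fun k => t (r k).
pose rho j := x j + (c j - z j).
pose P := \prod_(j < n) ('X - (rho j)%:P).
have hornerP y : P.[y] = \prod_(j < n) (y - rho j).
  by rewrite horner_prod; apply: eq_bigr => j _; rewrite hornerXsubC.
have sP : size P = n.+1.
  by rewrite size_prod_XsubC [index_enum _]unlock -enumT size_enum_ord.
have mP : P \is monic by apply: monic_prod_XsubC.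
have x_incr := gaps_incr x_gaps z_incr.
have P_alt k : (k < n)%N -> P.[x k] * P.[x k.+1] < 0.
  rewrite !hornerP; apply: (prod_interlaced_alternating x_incr) => // j.
  exact: shifted_interlace.
apply: (alternating_monic_not_dominated sF mP sP x_incr P_alt) => k kn.
have P_big : 2 * (K * n`!%:R) <= `|P.[x k]|.
  rewrite hornerP normr_prod -(zc_prodK k kn).
  apply: ler_prod => j _; rewrite normr_ge0 /=.
  exact: norm_sub_shifted_ge x_gaps z_incr z_c _ _ kn (ltn_ord j).
apply: (le_lt_trans (F_small _ (r_lt k kn))); rewrite normrM.
have := normr_ge0 (lead_coef F); nra.
Qed.

End Counting.

Lemma sorted_lt_int_gap (s : seq int) (i j : nat) :
  sorted <%O s -> (i <= j < size s)%N -> (j - i)%:Z <= s`_j - s`_i.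
Proof.
move=> s_sorted; elim: j => [|j IH] /andP[ij js].
  by move: ij; rewrite leqn0 => /eqP->; rewrite subrr.
case: (ltngtP i j.+1) ij => [ij|//|->] _; last by rewrite subnn subrr.
have ijs : (i <= j < size s)%N by rewrite -ltnS ij ltnW.
have := IH ijs.
have : s`_j < s`_j.+1 by apply: (sorted_ltn_nth lt_trans) => //; rewrite inE ltnW.
lia.
Qed.

Section IntValued.
Variable R : realType.

Lemma count_small_values (n : nat) (K : R) (f : {poly rat}) :
  0 < K -> int_valued f -> size f = n.+1 -> (0 < n)%N ->
  count_at_most (fun m : int => `|ratr f.[m%:~R] : R| <= K)
    (n%:R + 4 * (K * n`!%:R) `^ n%:R^-1).
Proof.
move=> K_gt0 f_int sf n_gt0 s s_uniq s_small; set F := map_poly (ratr : rat -> R) f.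
have sF : size F = n.+1 by rewrite size_map_poly.
have lead_ge : 1 <= `|lead_coef F| * n`!%:R.
  rewrite lead_coef_map -ratr_nat -ratr_norm -rmorphM -(rmorph1 (@ratr R)) ler_rat.
  rewrite mulrC -normr_nat -normrM norm_intr_ge1 ?int_valued_lead_coef //.
  by rewrite mulf_neq0 ?pnatr_eq0 -?lt0n ?fact_gt0 // lead_coef_eq0 -size_poly_gt0 sf.
set ss := sort <=%O s; have ss_sorted : sorted <%O ss by rewrite sort_lt_sorted.
have size_ss : size ss = size s by rewrite size_sort.
rewrite -size_ss.
apply: (count_le_of_bounded_values (F := F) (t := fun i => (ss`_i)%:~R)) => //.
  move=> i j /andP[ij jN].
  rewrite -natrB // -intrB -[(j - i)%:R]/((j - i)%:Z%:~R) ler_int.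
  by apply: sorted_lt_int_gap; rewrite ?ij.
move=> i iN; rewrite -ratr_int horner_map; apply: s_small.
by rewrite -(perm_mem (permEl (perm_sort <=%O s))) mem_nth.
Qed.

End IntValued.

Section Asymptotics.
Variable R : realType.
Local Notation e := (expR (1 : R)).

Lemma expR_le1Dnorm (v : R) : expR v <= 1 + `|v| * expR `|v|.
Proof.
have := expR_gt0 v; case: (lerP v 0) => v0.
  by have := expR_gt0 `|v|; have := normr_ge0 v; rewrite -expR_le1 in v0; nra.
by rewrite gtr0_norm //; have := expRxMexpNx_1 v; have := expR_ge1Dx (- v); nra.
Qed.

(* From [expR (- 1/(n+1)) >= 1 - 1/(n+1)]. *)
Lemma expR1_mul_exprS_le (n : nat) : (0 < n)%N -> e * n%:R ^+ n.+1 <= n.+1%:R ^+ n.+1.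
Proof.
move=> n_gt0; have n0 : (0 : R) < n%:R by rewrite ltr0n.
have n10 : (0 : R) < n.+1%:R by rewrite ltr0n.
set x := (n.+1%:R : R)^-1.
have ratio : expR x <= n.+1%:R / n%:R.
  rewrite -invf_div -[expR x]invrK lef_pV2 ?posrE ?invr_gt0 ?expR_gt0 ?divr_gt0 //.
  have -> : n%:R / n.+1%:R = 1 - x by rewrite /x -natr1; field; rewrite natr1 gt_eqF.
  by rewrite -expRN expR_ge1Dx.
have -> : e = expR x ^+ n.+1 by rewrite -expRM_natl /x mulfV // gt_eqF.
rewrite -[n.+1%:R ^+ _](divfK (_ : n%:R ^+ n.+1 != 0)) ?expf_neq0 ?gt_eqF //.
by rewrite -expr_div_n ler_pM2r ?exprn_gt0 // lerXn2r ?nnegrE.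
Qed.

Lemma fact_expR_le (n : nat) : (0 < n)%N -> n`!%:R * expR n%:R <= e * n%:R ^+ n.+1 :> R.
Proof.
elim: n => [//|[|m] IH] _; first by rewrite mul1r expr1n mulr1.
set k := m.+1; have k_gt0 : (0 : R) < k.+1%:R by rewrite ltr0n.
have -> : k.+1`!%:R * expR k.+1%:R = (k.+1%:R * e) * (k`!%:R * expR k%:R) :> R.
  by rewrite factS natrM -natr1 expRD; ring.
rewrite exprS -[in X in X <= _]mulrA [in X in _ <= X]mulrCA !ler_pM2l ?expR_gt0 //.
exact: le_trans (IH isT) (expR1_mul_exprS_le (ltn0Sn m)).
Qed.

Lemma powR_fact_le (K : R) (n : nat) : 0 < K -> (0 < n)%N ->
  (K * n`!%:R) `^ n%:R^-1 <= n%:R / e * expR (n%:R^-1 * ln (K * e * n%:R)).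
Proof.
move=> K_gt0 n_gt0; have n0 : (0 : R) < n%:R by rewrite ltr0n.
have e0 : 0 < e := expR_gt0 1.
have Ken0 : 0 < K * e * n%:R by rewrite !mulr_gt0.
have fact_le : K * n`!%:R <= (n%:R / e) ^+ n * (K * e * n%:R).
  have en_gt0 : 0 < e ^+ n by rewrite exprn_gt0.
  rewrite -(ler_pM2r en_gt0).
  have -> : (n%:R / e) ^+ n * (K * e * n%:R) * e ^+ n = K * (e * n%:R ^+ n.+1).
    by rewrite expr_div_n exprS; field; rewrite gt_eqF.
  by rewrite -mulrA ler_pM2l // -expRM_natl mulr1 fact_expR_le.
have ne_ge0 : 0 <= n%:R / e by rewrite divr_ge0 ?ler0n ?ltW.
apply: le_trans (ge0_ler_powR _ _ _ fact_le) _; rewrite ?nnegrE ?invr_ge0 ?ler0n //.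
- by rewrite ltW // mulr_gt0 // ltr0n fact_gt0.
- by rewrite mulr_ge0 ?exprn_ge0 ?(ltW Ken0).
rewrite powRM ?exprn_ge0 ?(ltW Ken0) // -powR_mulrn // -powRrM mulfV ?gt_eqF //.
by rewrite powRr1 // /powR gt_eqF.
Qed.

(* Writing the root as [n/e * expR v] with [n * |v| <= |ln (K e)| + ln n], the
   excess over [n/e] is [O(ln n)] because [v] stays bounded. *)
Lemma root_fact_asymptotics (K : R) : 0 < K -> exists C : R, forall n : nat, (2 <= n)%N ->
  n%:R + 4 * (K * n`!%:R) `^ n%:R^-1 <= (1 + 4 / e) * n%:R + C * ln n%:R.
Proof.
move=> K_gt0; have e0 : 0 < e := expR_gt0 1.
set L := `|ln (K * e)|; set A := L + 1; have L_ge0 : 0 <= L := normr_ge0 _.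
have ln2_gt0 : 0 < ln (2 : R) by rewrite ln_gt0 // ltr1n.
exists (4 * expR A / e * (L / ln 2 + 1)) => n n2.
have n_gt0 : (0 < n)%N by apply: leq_trans n2.
have n0 : (0 : R) < n%:R by rewrite ltr0n.
have n1 : (1 : R) <= n%:R by rewrite ler1n.
have lnn2 : ln 2 <= ln (n%:R : R) by rewrite ler_ln ?posrE ?ler_nat // ltr0n.
have lnn_le : ln (n%:R : R) <= n%:R by apply/ltW/ln_sublinear.
set v := n%:R^-1 * ln (K * e * n%:R).
have nv : n%:R * `|v| <= L + ln n%:R.
  rewrite normrM normfV (gtr0_norm n0) mulVKf ?gt_eqF // lnM ?posrE ?mulr_gt0 //.
  by rewrite (le_trans (ler_normD _ _)) // (gtr0_norm (lt_le_trans ln2_gt0 lnn2)).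
have v_le : `|v| <= A.
  rewrite -(ler_pM2l n0) /A mulrDr mulr1; have : L <= n%:R * L by nra.
  lra.
have root_le : (K * n`!%:R) `^ n%:R^-1 <= n%:R / e + (L + ln n%:R) * (expR A / e).
  apply: le_trans (powR_fact_le K_gt0 n_gt0) _.
  have := expR_le1Dnorm v; have : expR `|v| <= expR A by rewrite ler_expR.
  have := expR_gt0 A; have := normr_ge0 v; have : 0 < n%:R / e by rewrite divr_gt0.
  move=> ne0 v0 eA0 ev_le exp_le.
  have -> : n%:R / e + (L + ln n%:R) * (expR A / e) =
            n%:R / e * (1 + (L + ln n%:R) / n%:R * expR A).
    by field; rewrite !gt_eqF.
  rewrite ler_pM2l //; apply: le_trans exp_le _; rewrite lerD2l.
  by rewrite ler_pM // ler_pdivlMr // mulrC.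
have L_le : L <= L / ln 2 * ln n%:R.
  by rewrite mulrAC -mulrA ler_peMr // ler_pdivlMr // mul1r.
have B_gt0 : 0 < expR A / e by rewrite divr_gt0 ?expR_gt0.
have : (L + ln n%:R) * (expR A / e) <= (L / ln 2 + 1) * ln n%:R * (expR A / e).
  by rewrite ler_pM2r // mulrDl mul1r lerD2r.
move: root_le; set B := expR A / e; set X := _ `^ _ => root_le sum_le.
have -> : 4 * expR A / e = 4 * B by rewrite /B mulrA.
lra.
Qed.

End Asymptotics.

Theorem mainTheorem8 (R : realType) :
  (forall (K : R) (f : {poly rat}), 0 < K -> int_valued f ->
     let n := (size f).-1 in (1 <= n)%N ->
     count_at_most (fun m : int => `|ratr f.[m%:~R] : R| <= K)
       (n%:R + 4 * ((K * (n`!)%:R) `^ (n%:R^-1))))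
  /\
  (forall K : R, 0 < K -> exists C : R,
     forall (f : {poly rat}) (S : seq int),
       int_valued f -> (2 <= (size f).-1)%N ->
       (forall s, s \in S -> (`|s|%:~R : R) <= K) ->
       count_at_most (fun m : int => exists2 s, s \in S & f.[m%:~R] = s%:~R)
         ((1 + 4 / expR 1) * ((size f).-1)%:R + C * ln (((size f).-1)%:R))).
Proof.
have size_pred (f : {poly rat}) : (0 < (size f).-1)%N -> size f = (size f).-1.+1.
  by case: (size f).
split=> [K f K_gt0 f_int n n_gt0 | K K_gt0].
  exact: count_small_values K_gt0 f_int (size_pred f n_gt0) n_gt0.
have [C C_bound] := root_fact_asymptotics K_gt0.
exists C => f S f_int n_ge2 S_small s s_uniq s_vals.
have n_gt0 : (0 < (size f).-1)%N by apply: leq_trans n_ge2.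
apply: le_trans (C_bound _ n_ge2).
apply: (count_small_values K_gt0 f_int (size_pred f n_gt0) n_gt0 s_uniq).
move=> m /s_vals[v vS ->].
by rewrite ratr_int -intr_norm S_small.
Qed.
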